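(* Let $R$ be a ring and $n\geq 1$. Then $R$ is isomorphic to a direct product of $n$ left localization maximal rings if and only if the following conditions hold: (1) $\max\mathrm{Den}_l(R)=\{S_1,\ldots,S_n\}$ (with the $S_i$ distinct); (2) $\mathfrak{l}_R=0$; (3) $\mathrm{ass}(S_i)+\mathrm{ass}(S_j)=R$ for all $i\neq j$; (4) the factor rings $R/\mathrm{ass}(S_i)$, $i=1,\ldots,n$, are left localization maximal rings. Moreover, in this case: (a) for each $i$, the ring $R_i:=S_i^{-1}R$ is a left localization maximal ring, the homomorphism $\sigma_i:R\to R_i$, $r\mapsto\frac{r}{1}$, is surjective with $\ker(\sigma_i)=\mathrm{ass}(S_i)$, so $R_i\cong R/\mathrm{ass}(S_i)$; (b) the map $\sigma:=\prod_{i=1}^n\sigma_i:R\to\prod_{i=1}^nR_i$ is an isomorphism; (c) identifying $R$ with $\prod_{i=1}^nR_i$ via $\sigma$, one has $S_i=R_1\times\cdots\times R_i^*\times\cdots\times R_n=\sigma_i^{-1}(R_i^* )$, where $R_i^*$ is the group of units of $R_i\cong R/\mathrm{ass}(S_i)$, and $R_i^*=\sigma_i(S_i)$ for each $i$; (d) $\mathrm{ass}(S_i)=R_1\times\cdots\times 0\times\cdots\times R_n$ (with $0$ in the $i$-th place) for each $i$.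
   Context: All rings are associative with $1$. A multiplicative subset $S$ of $R$ ($1\in S$, $0\notin S$, closed under multiplication) is a left Ore set if $Sr\cap Rs\neq\emptyset$ for all $r\in R$, $s\in S$; for it, $\mathrm{ass}(S):=\{r\in R: sr=0\text{ for some } s\in S\}$. A left Ore set $S$ is a left denominator set if $rs=0$ ($r\in R$, $s\in S$) implies $tr=0$ for some $t\in S$. $\mathrm{Den}_l(R)$ is the set of left denominator sets, $S^{-1}R$ the left localization, $\max\mathrm{Den}_l(R)$ the set of maximal elements of $(\mathrm{Den}_l(R),\subseteq)$, and $\mathfrak{l}_R:=\bigcap_{S\in\max\mathrm{Den}_l(R)}\mathrm{ass}(S)$ the left localization radical. For a ring $A$, $S_0(A)$ is the largest left Ore set of $A$ consisting of regular elements (it exists and is a left denominator set) and $Q_l(A):=S_0(A)^{-1}A$. A ring $A$ is a left localization maximal ring if $A=Q_l(A)$ (i.e. $S_0(A)$ consists of units of $A$) and $\{\mathrm{ass}(S): S\in\mathrm{Den}_l(A)\}=\{0\}$. *)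

(* Rings are (possibly non-commutative) nzRingType's
   (associative with 1, 1 <> 0: the statement needs 0 \notin S, 1 \in S). *)
From mathcomp Require Import all_boot all_algebra.
Set Implicit Arguments. Unset Strict Implicit. Unset Printing Implicit Defensive.
Import GRing.Theory.
Local Open Scope ring_scope.

Definition rset (R : Type) := R -> Prop.

Definition is_unit (R : nzRingType) (x : R) : Prop :=
  exists y : R, x * y = 1 /\ y * x = 1.

Section Defs.
Variable R : nzRingType.


Definition regular (x : R) : Prop :=
  (forall y : R, x * y = 0 -> y = 0) /\ (forall y : R, y * x = 0 -> y = 0).

Definition mult_subset (S : rset R) : Prop :=
  S 1 /\ ~ S 0 /\ (forall a b : R, S a -> S b -> S (a * b)).

Definition left_ore (S : rset R) : Prop :=
  mult_subset S /\
  (forall r s : R, S s -> exists s' r' : R, S s' /\ s' * r = r' * s).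

Definition ass (S : rset R) : rset R := fun r => exists s : R, S s /\ s * r = 0.

Definition left_den (S : rset R) : Prop :=
  left_ore S /\
  (forall r s : R, S s -> r * s = 0 -> exists t : R, S t /\ t * r = 0).

Definition max_den (S : rset R) : Prop :=
  left_den S /\
  (forall T : rset R, left_den T -> (forall x, S x -> T x) -> forall x, T x -> S x).

Definition lrad : rset R := fun r => forall S : rset R, max_den S -> ass S r.

(* S_0(R): the largest left Ore set of regular elements, i.e. the union of
   all left Ore sets consisting of regular elements *)
Definition S0 : rset R :=
  fun x => exists S : rset R, left_ore S /\ (forall y, S y -> regular y) /\ S x.

(* left localization maximal ring: R = Q_l(R) (S_0(R) consists of units) and
   ass(S) = 0 for every left denominator set S *)
Definition left_loc_max : Prop :=
  (forall x : R, S0 x -> is_unit x) /\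
  (forall S : rset R, left_den S -> forall r : R, ass S r -> r = 0).

Definition is_left_loc (S : rset R) (Q : nzRingType) (f : {rmorphism R -> Q}) : Prop :=
  (forall s : R, S s -> is_unit (f s)) /\
  (forall q : Q, exists s r : R, S s /\ f s * q = f r) /\
  (forall r : R, f r = 0 <-> ass S r).

Definition ideal_sum_full (I J : rset R) : Prop :=
  forall x : R, exists a b : R, I a /\ J b /\ x = a + b.

End Defs.

(* the factor ring R/I is a left localization maximal ring: realised as the
   codomain of a surjective ring homomorphism with kernel I *)
Definition quot_left_loc_max (R : nzRingType) (I : rset R) : Prop :=
  exists (B : nzRingType) (g : {rmorphism R -> B}),
    (forall b : B, exists r : R, g r = b) /\
    (forall r : R, g r = 0 <-> I r) /\ left_loc_max B.


Definition prod_iso (R : nzRingType) (n : nat) (A : 'I_n -> nzRingType)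
    (f : forall i, {rmorphism R -> A i}) : Prop :=
  (forall r r' : R, (forall i, f i r = f i r') -> r = r') /\
  (forall a : forall i, A i, exists r : R, forall i, f i r = a i).

Definition conditions (R : nzRingType) (n : nat) (S : 'I_n -> rset R) : Prop :=
  ((forall T : rset R, max_den T <-> exists i, forall x, T x <-> S i x) /\
   (forall i j, i <> j -> ~ (forall x, S i x <-> S j x))) /\
  (forall r : R, lrad r -> r = 0) /\
  (forall i j, i <> j -> ideal_sum_full (ass (S i)) (ass (S j))) /\
  (forall i, quot_left_loc_max (ass (S i))).

(* If R = A_1 x ... x A_n with each A_i left localization maximal, the maximal left
   denominator sets of R are exactly the preimages S_i of the unit groups A_i^*: a left
   denominator set T avoids some kernel ker(pr_i) (otherwise a product of elements of T
   would vanish), and then pr_i(T) is a left denominator set of A_i, hence consists of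
   units. Conversely, conditions (2) and (3) make R -> prod_i R/ass(S_i) injective and,
   by the Chinese remainder theorem, surjective; each S_i then becomes the preimage of
   the units of the i-th factor, which forces S_i^{-1}R = R/ass(S_i). *)
From mathcomp Require Import all_boot all_algebra.
From Stdlib Require Import Classical ClassicalEpsilon FunctionalExtensionality PropExtensionality.
Set Implicit Arguments. Unset Strict Implicit. Unset Printing Implicit Defensive.
Import GRing.Theory.
Local Open Scope ring_scope.

Lemma rset_ext (R : Type) (S T : rset R) : (forall x, S x <-> T x) -> S = T.
Proof.
by move=> h; apply: functional_extensionality => x; exact: propositional_extensionality.
Qed.

Lemma ass_ext (R : nzRingType) (S T : rset R) :
  (forall x, S x <-> T x) -> forall r, ass S r <-> ass T r.
Proof. by move=> /rset_ext ->. Qed.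

Section Units.
Variable A : nzRingType.

Lemma is_unit0 : ~ is_unit (0 : A).
Proof. by case=> y [h _]; move: h; rewrite mul0r => /eqP; rewrite eq_sym oner_eq0. Qed.

Lemma is_unit1 : is_unit (1 : A).
Proof. by exists 1; rewrite mulr1. Qed.

Lemma is_unitM (x y : A) : is_unit x -> is_unit y -> is_unit (x * y).
Proof.
case=> x' [xx' x'x] [y' [yy' y'y]]; exists (y' * x'); split.
  by rewrite mulrA -(mulrA x) yy' mulr1.
by rewrite mulrA -(mulrA y') x'x mulr1.
Qed.

(* Since ass T = 0, T consists of regular elements and hence lies in S_0(A). *)
Lemma left_den_is_unit (T : rset A) : left_loc_max A -> left_den T ->
  forall x, T x -> is_unit x.
Proof.
case=> S0_unit ass0 T_den x Tx; apply: S0_unit; exists T.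
split; first by case: T_den.
split=> // y Ty; split=> z yz0; apply: (ass0 T T_den).
  by exists y.
by case: T_den => _ /(_ z y Ty yz0) [t [Tt tz0]]; exists t.
Qed.

End Units.

Lemma mul_closed_common_kernel (R : nzRingType) n (A : 'I_n -> nzRingType)
    (f : forall i, {rmorphism R -> A i}) (T : rset R) :
  T 1 -> (forall a b, T a -> T b -> T (a * b)) ->
  (forall i, exists t, T t /\ f i t = 0) -> exists t, T t /\ forall i, f i t = 0.
Proof.
move=> T1 TM hker.
suff [t [Tt ht]] : exists t, T t /\ forall i, i \in enum 'I_n -> f i t = 0.
  by exists t; split=> // i; apply: ht; rewrite mem_enum.
elim: (enum 'I_n) => [|i s [t [Tt ht]]]; first by exists 1.
case: (hker i) => t' [Tt' ht']; exists (t' * t); split; first exact: TM.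
by move=> k; rewrite in_cons rmorphM => /orP [/eqP -> | /ht ->]; rewrite ?ht' ?mul0r ?mulr0.
Qed.

Section ProductDecomposition.
Variables (R : nzRingType) (n : nat) (A : 'I_n -> nzRingType).
Variable f : forall i, {rmorphism R -> A i}.
Hypothesis f_iso : prod_iso f.

Lemma prod_iso_eq0 r : (forall i, f i r = 0) -> r = 0.
Proof. by move=> h; apply: f_iso.1 => i; rewrite h rmorph0. Qed.

Lemma prod_iso_surj i (b : A i) : exists r, f i r = b.
Proof.
pose a j := if i =P j is ReflectT E then eq_rect i A b j E else 0.
case: f_iso => _ /(_ a) [r hr]; exists r; rewrite hr /a.
by case: (i =P i) => // E; rewrite (eq_irrelevance E erefl).
Qed.

Lemma prod_iso_delta i : exists e, forall j, f j e = if j == i then 1 else 0.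
Proof. by case: f_iso => _ /(_ (fun j => if j == i then 1 else 0)). Qed.

Lemma delta_mul_eq0 i e x : (forall j, f j e = if j == i then 1 else 0) ->
  f i x = 0 -> e * x = 0.
Proof.
move=> he fx0; apply: prod_iso_eq0 => j; rewrite rmorphM he.
by case: eqP => [->|_]; rewrite ?fx0 ?mulr0 ?mul0r.
Qed.

Definition unit_preim i : rset R := fun r => is_unit (f i r).

Lemma unit_preim_delta i e : (forall j, f j e = if j == i then 1 else 0) ->
  forall j, unit_preim j e <-> j = i.
Proof.
move=> he j; rewrite /unit_preim he.
case: eqP => [-> | ji]; first by split=> // _; exact: is_unit1.
by split=> // u0; case: (is_unit0 u0).
Qed.

Lemma unit_preim_sub_eq i j :
  (forall x, unit_preim i x -> unit_preim j x) -> i = j.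
Proof.
case: (prod_iso_delta i) => e he sub; symmetry.
by apply/(unit_preim_delta he)/sub/(unit_preim_delta he).
Qed.

Lemma ass_unit_preim i r : ass (unit_preim i) r <-> f i r = 0.
Proof.
split=> [[s [[y [_ ys]] sr0]] | fr0].
  by rewrite -[f i r]mul1r -ys -mulrA -rmorphM sr0 rmorph0 mulr0.
case: (prod_iso_delta i) => e he; exists e; split; first exact/(unit_preim_delta he).
exact: delta_mul_eq0 he fr0.
Qed.

Lemma unit_preim_den i : left_den (unit_preim i).
Proof.
case: (prod_iso_delta i) => e he.
have Se : unit_preim i e by exact/(unit_preim_delta he).
split; [split; [split; [|split]|] |].
- by rewrite /unit_preim rmorph1; exact: is_unit1.
- by rewrite /unit_preim rmorph0; exact: is_unit0.
- by move=> a b; rewrite /unit_preim rmorphM; exact: is_unitM.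
- move=> r s [v [_ vs]]; case: (prod_iso_surj v) => s1 hs1.
  exists e, (e * r * s1); split=> //; apply: f_iso.1 => j; rewrite !rmorphM he.
  by case: eqP => [->|_]; rewrite ?mul0r // hs1 -mulrA vs mulr1.
- move=> r s [v [sv _]] rs0; exists e; split=> //.
  apply: delta_mul_eq0 he _.
  by rewrite -[f i r]mulr1 -sv mulrA -rmorphM rs0 rmorph0 mul0r.
Qed.

Lemma image_left_den i (T : rset R) : left_den T -> (forall t, T t -> f i t <> 0) ->
  left_den (fun a => exists t, T t /\ f i t = a).
Proof.
move=> [[[T1 [T0 TM]] T_ore] T_den] T_nz.
case: (prod_iso_delta i) => e he.
split; [split; [split; [|split]|] |].
- by exists 1; rewrite rmorph1.
- by case=> t [Tt ft0]; exact: T_nz Tt ft0.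
- move=> _ _ [t [Tt <-]] [t' [Tt' <-]].
  by exists (t * t'); rewrite rmorphM; split=> //; exact: TM.
- move=> r _ [t [Tt <-]]; case: (prod_iso_surj r) => r1 <-.
  case: (T_ore r1 t Tt) => s' [r' [Ts' h]].
  by exists (f i s'), (f i r'); split; [exists s' | rewrite -!rmorphM h].
- move=> r _ [t [Tt <-]] rt0; case: (prod_iso_surj r) => r1 fr1.
  (* multiplying by the i-th unit vector e makes [r1 * t] vanish in R, not just in A i *)
  have er1t0 : e * r1 * t = 0 by rewrite -mulrA (delta_mul_eq0 he) // rmorphM fr1.
  case: (T_den (e * r1) t Tt er1t0) => t' [Tt' h].
  exists (f i t'); split; first by exists t'.
  by move: (congr1 (f i) h); rewrite !rmorphM he eqxx mul1r fr1 rmorph0.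
Qed.

Hypothesis A_max : forall i, left_loc_max (A i).

Lemma left_den_sub_unit_preim (T : rset R) : left_den T ->
  exists i, forall t, T t -> unit_preim i t.
Proof.
move=> T_den.
suff [i T_nz] : exists i, forall t, T t -> f i t <> 0.
  exists i => t Tt; apply: (left_den_is_unit (A_max i) (image_left_den T_den T_nz)).
  by exists t.
apply: NNPP => no_i.
have hker i : exists t, T t /\ f i t = 0.
  by apply: NNPP => hi; apply: no_i; exists i => t Tt ft0; apply: hi; exists t.
case: T_den => [[[T1 [T0 TM]] _] _].
case: (mul_closed_common_kernel T1 TM hker) => t [Tt ht].
by apply: T0; rewrite -(prod_iso_eq0 ht).
Qed.

Lemma max_den_unit_preim (T : rset R) :
  max_den T <-> exists i, forall x, T x <-> unit_preim i x.
Proof.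
split=> [[T_den T_max] | [i /rset_ext ->]].
  case: (left_den_sub_unit_preim T_den) => i sub; exists i => x; split; first exact: sub.
  exact: T_max (unit_preim_den i) sub x.
split=> [|T' T'_den sub x T'x]; first exact: unit_preim_den.
case: (left_den_sub_unit_preim T'_den) => j subj.
suff ij : i = j by rewrite ij; exact: subj.
by apply: unit_preim_sub_eq => y /sub /subj.
Qed.

Lemma conditions_unit_preim : conditions unit_preim.
Proof.
split; [split|split; [|split]].
- exact: max_den_unit_preim.
- by move=> i j ij ieqj; apply: ij; apply: unit_preim_sub_eq => x /ieqj.
- move=> r r_rad; apply: prod_iso_eq0 => j.
  by apply/ass_unit_preim; apply: r_rad; apply/max_den_unit_preim; exists j.
- move=> i j /eqP ij x; case: (prod_iso_delta i) => e he.
  exists (x - e * x), (e * x); split; last split; last by rewrite subrK.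
    by apply/ass_unit_preim; rewrite rmorphB rmorphM he eqxx mul1r subrr.
  by apply/ass_unit_preim; rewrite rmorphM he eq_sym (negbTE ij) mul0r.
- move=> i; exists (A i), (f i); split; first exact: prod_iso_surj.
  by split=> // r; rewrite ass_unit_preim.
Qed.

End ProductDecomposition.

Section ChineseRemainder.
Variables (R : nzRingType) (n : nat) (B : 'I_n -> nzRingType).
Variable g : forall i, {rmorphism R -> B i}.
Hypothesis g_surj : forall i (b : B i), exists r, g i r = b.
Hypothesis g_comax :
  forall i j, i != j -> ideal_sum_full (fun r => g i r = 0) (fun r => g j r = 0).

Lemma comaximal_sep i j : i != j -> exists x, g i x = 1 /\ g j x = 0.
Proof.
move=> ij; case: (g_comax ij 1) => a [b [ga0 [gb0 ab]]]; exists b; split=> //.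
by rewrite -[g i b]add0r -ga0 -rmorphD -ab rmorph1.
Qed.

Lemma comaximal_delta i (s : seq 'I_n) :
  i \notin s -> exists u, g i u = 1 /\ forall k, k \in s -> g k u = 0.
Proof.
elim: s => [|k s IH]; first by exists 1; rewrite rmorph1.
rewrite in_cons negb_or => /andP [ik /IH [u [gu hu]]].
case: (comaximal_sep ik) => x [gix gkx]; exists (x * u).
split=> [|k']; first by rewrite rmorphM gix gu mulr1.
by rewrite in_cons rmorphM => /orP [/eqP -> | /hu ->]; rewrite ?gkx ?mul0r ?mulr0.
Qed.

Lemma comaximal_interpolate (a : forall i, B i) (s : seq 'I_n) :
  exists r, forall k, k \in s -> g k r = a k.
Proof.
elim: s => [|i s [r hr]]; first by exists 0.
have [i_in | i_notin] := boolP (i \in s).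
  by exists r => k; rewrite in_cons => /orP [/eqP -> |]; apply: hr.
case: (comaximal_delta i_notin) => u [giu hu]; case: (g_surj (a i)) => c gc.
exists (r + (c - r) * u) => k; rewrite in_cons rmorphD rmorphM => /orP [/eqP -> | ks].
  by rewrite giu mulr1 rmorphB gc addrC subrK.
by rewrite hu // mulr0 addr0 hr.
Qed.

Lemma prod_iso_comaximal :
  (forall r, (forall i, g i r = 0) -> r = 0) -> prod_iso g.
Proof.
move=> g_ker0; split=> [r r' grr' | a].
  by apply/eqP; rewrite -subr_eq0; apply/eqP/g_ker0 => i; rewrite rmorphB grr' subrr.
case: (comaximal_interpolate a (enum 'I_n)) => r hr.
by exists r => i; apply: hr; rewrite mem_enum.
Qed.

End ChineseRemainder.

Section ConditionsConsequences.
Variables (R : nzRingType) (n : nat) (S : 'I_n -> rset R).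
Hypothesis HS : conditions S.
Variables (B : 'I_n -> nzRingType) (g : forall i, {rmorphism R -> B i}).
Hypothesis g_ker : forall i r, g i r = 0 <-> ass (S i) r.

Lemma conditions_prod_iso : (forall i (b : B i), exists r, g i r = b) -> prod_iso g.
Proof.
case: HS => [[max_S _] [rad0 [comax _]]] g_surj.
apply: prod_iso_comaximal => // [i j /eqP ij x | r r0].
  case: (comax i j ij x) => a [b [ha [hb ab]]].
  by exists a, b; split; [exact/g_ker | split; [exact/g_ker |]].
apply: rad0 => T /max_S [i /ass_ext ->]; exact/g_ker.
Qed.

Lemma conditions_unit_preimE : prod_iso g -> (forall i, left_loc_max (B i)) ->
  forall i x, S i x <-> unit_preim g i x.
Proof.
move=> g_iso B_max i.
have : max_den (S i) by apply/(HS.1.1 (S i)); exists i.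
case/(max_den_unit_preim g_iso B_max) => j Si_j.
have [ij | ij] := eqVneq i j; first by subst j.
(* ass (S i) = ker (g j) = ass (S j) would contradict ass (S i) + ass (S j) = R *)
case: (HS.2.2.1 i j (elimN eqP ij) 1) => a [b [ha [hb ab]]].
have gja : g j a = 0 by apply/(ass_unit_preim g_iso)/(ass_ext Si_j).
have gjb : g j b = 0 by exact/g_ker.
by move: (oner_neq0 (B j)); rewrite -(rmorph1 (g j)) ab rmorphD gja gjb addr0 eqxx.
Qed.

End ConditionsConsequences.

Lemma quot_left_loc_max_family (R : nzRingType) n (I : 'I_n -> rset R) :
  (forall i, quot_left_loc_max (I i)) ->
  exists (B : 'I_n -> nzRingType) (g : forall i, {rmorphism R -> B i}),
    (forall i (b : B i), exists r, g i r = b) /\ (forall i r, g i r = 0 <-> I i r) /\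
    (forall i, left_loc_max (B i)).
Proof.
move=> hI.
pose cB i := constructive_indefinite_description _ (hI i).
pose cg i := constructive_indefinite_description _ (proj2_sig (cB i)).
exists (fun i => proj1_sig (cB i)), (fun i => proj1_sig (cg i)).
by split; last split; move=> i; case: (proj2_sig (cg i)) => [? [? ?]].
Qed.

Lemma left_loc_max_iso (B Q : nzRingType) (h : B -> Q) :
  (forall x y, h (x * y) = h x * h y) -> h 1 = 1 -> h 0 = 0 ->
  injective h -> (forall q, exists b, h b = q) ->
  left_loc_max B -> left_loc_max Q.
Proof.
move=> hM h1 h0 h_inj h_surj [S0_unit ass0].
pose pre (T : rset Q) : rset B := fun b => T (h b).
have pre_ore T : left_ore T -> left_ore (pre T).
  move=> [[T1 [T0 TM]] T_ore]; split; [split; [|split]|].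
  - by rewrite /pre h1.
  - by rewrite /pre h0.
  - by move=> a b ha hb; rewrite /pre hM; exact: TM.
  - move=> r s hs; case: (T_ore (h r) (h s) hs) => s' [r' [Ts' e]].
    case: (h_surj s') => s1 hs1; case: (h_surj r') => r1 hr1.
    by exists s1, r1; split; [rewrite /pre hs1 | apply: h_inj; rewrite !hM hs1 hr1].
have pre_den T : left_den T -> left_den (pre T).
  move=> [T_ore T_den]; split; first exact: pre_ore.
  move=> r s hs rs0; case: (T_den (h r) (h s) hs); first by rewrite -hM rs0 h0.
  move=> t [Tt tr0]; case: (h_surj t) => t1 ht1; exists t1; split; first by rewrite /pre ht1.
  by apply: h_inj; rewrite hM ht1 tr0 h0.
split=> [q [T [T_ore [T_reg Tq]]] | T T_den r [s [Ts sr0]]].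
  case: (h_surj q) Tq => b <- Tq.
  have [c [bc cb]] : is_unit b.
    apply: S0_unit; exists (pre T); split; first exact: pre_ore.
    split=> // y Ty; case: (T_reg _ Ty) => regl regr.
    by split=> z yz0; apply: h_inj; rewrite h0; [apply: regl | apply: regr]; rewrite -hM yz0.
  by exists (h c); rewrite -!hM bc cb.
case: (h_surj r) sr0 => b <- sr0; case: (h_surj s) => s1 hs1.
suff -> : b = 0 by [].
apply: (ass0 _ (pre_den T T_den)); exists s1; split; first by rewrite /pre hs1.
by apply: h_inj; rewrite hM hs1 sr0 h0.
Qed.

Lemma rmorph_eq_of_ker (R B Q : nzRingType) (g : {rmorphism R -> B})
    (s : {rmorphism R -> Q}) :
  (forall r, g r = 0 <-> s r = 0) -> forall x y, g x = g y -> s x = s y.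
Proof.
move=> ker_gs x y gxy; apply/eqP; rewrite -subr_eq0 -rmorphB; apply/eqP/ker_gs.
by rewrite rmorphB gxy subrr.
Qed.

(* Two surjections with the same kernel induce an isomorphism of their codomains. *)
Lemma left_loc_max_ker (R B Q : nzRingType) (g : {rmorphism R -> B})
    (s : {rmorphism R -> Q}) :
  (forall b, exists r, g r = b) -> (forall q, exists r, s r = q) ->
  (forall r, g r = 0 <-> s r = 0) -> left_loc_max B -> left_loc_max Q.
Proof.
move=> g_surj s_surj ker_gs.
have ker_sg r : s r = 0 <-> g r = 0 by rewrite ker_gs.
pose pre b := proj1_sig (constructive_indefinite_description _ (g_surj b)).
have preK b : g (pre b) = b := proj2_sig (constructive_indefinite_description _ (g_surj b)).
pose h b := s (pre b).
have hg r : h (g r) = s r by apply: (rmorph_eq_of_ker ker_gs); exact: preK.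
apply: (@left_loc_max_iso B Q h).
- by move=> x y; rewrite -(preK x) -(preK y) -rmorphM !hg rmorphM.
- by rewrite -(rmorph1 g) hg rmorph1.
- by rewrite -(rmorph0 g) hg rmorph0.
- by move=> x y; rewrite -(preK x) -(preK y) !hg => /(rmorph_eq_of_ker ker_sg) ->.
- by move=> q; case: (s_surj q) => r <-; exists (g r).
Qed.

Lemma left_loc_surj (R B Q : nzRingType) (S : rset R) (g : {rmorphism R -> B})
    (s : {rmorphism R -> Q}) :
  is_left_loc S s -> (forall b, exists r, g r = b) -> (forall r, g r = 0 <-> s r = 0) ->
  (forall x, S x -> is_unit (g x)) -> forall q, exists r, s r = q.
Proof.
move=> [_ [s_frac _]] g_surj ker_gs S_unit q.
case: (s_frac q) => t [r [St tq]].
case: (S_unit t St) => c [_ ct]; case: (g_surj c) => t1 gt1.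
have t1t : s (t1 * t) = 1.
  by rewrite -(rmorph1 s); apply: (rmorph_eq_of_ker ker_gs); rewrite rmorphM gt1 ct rmorph1.
by exists (t1 * r); rewrite rmorphM -tq mulrA -rmorphM t1t mul1r.
Qed.

Theorem theorem2p11 (R : nzRingType) (n : nat) (hn : (1 <= n)%N) :
  ((exists (A : 'I_n -> nzRingType) (f : forall i, {rmorphism R -> A i}),
      (forall i, left_loc_max (A i)) /\ prod_iso f)
   <-> (exists S : 'I_n -> rset R, conditions S))
  /\
  (forall S : 'I_n -> rset R, conditions S ->
   forall (Q : 'I_n -> nzRingType) (sigma : forall i, {rmorphism R -> Q i}),
   (forall i, is_left_loc (S i) (sigma i)) ->
   (* (a) *)
   (forall i, left_loc_max (Q i) /\
              (forall q : Q i, exists r : R, sigma i r = q) /\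
              (forall r : R, sigma i r = 0 <-> ass (S i) r)) /\
   (* (b) *)
   prod_iso sigma /\
   (* (c) *)
   (forall i, (forall r : R, S i r <-> is_unit (sigma i r)) /\
              (forall q : Q i, is_unit q <-> exists s : R, S i s /\ sigma i s = q)) /\
   (* (d) *)
   (forall i (r : R), ass (S i) r <-> sigma i r = 0)).
Proof.
split.
  split=> [[A [f [A_max f_iso]]] | [S HS]].
    by exists (unit_preim f); exact: conditions_unit_preim.
  case: (quot_left_loc_max_family HS.2.2.2) => B [g [g_surj [g_ker B_max]]].
  by exists B, g; split=> //; exact: (conditions_prod_iso HS g_ker g_surj).
move=> S HS Q sigma loc.
case: (quot_left_loc_max_family HS.2.2.2) => B [g [g_surj [g_ker B_max]]].
have sigma_ker i r : sigma i r = 0 <-> ass (S i) r by case: (loc i) => _ [_].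
have ker_gs i r : g i r = 0 <-> sigma i r = 0 by rewrite g_ker sigma_ker.
have S_unit_g := conditions_unit_preimE HS g_ker (conditions_prod_iso HS g_ker g_surj) B_max.
have sigma_surj i : forall q, exists r, sigma i r = q.
  by apply: (left_loc_surj (loc i) (g_surj i) (ker_gs i)) => x /S_unit_g.
have Q_max i : left_loc_max (Q i).
  exact: left_loc_max_ker (g_surj i) (sigma_surj i) (ker_gs i) (B_max i).
have sigma_iso := conditions_prod_iso HS sigma_ker sigma_surj.
have S_unit := conditions_unit_preimE HS sigma_ker sigma_iso Q_max.
split; first by move=> i; split; [|split]; [exact: Q_max | exact: sigma_surj | exact: sigma_ker].
split=> //; split=> [i | i r]; last by rewrite sigma_ker.
split=> [r | q]; first exact: S_unit.
split=> [| [s [Ss <-]]]; last exact/S_unit.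
by case: (sigma_surj i q) => r <- /S_unit ?; exists r.
Qed.
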